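(* Let $(X,\mathcal{M})$ and $(U,\mathcal{U})$ be analytic measurable spaces, and let $\mathcal{A}\subseteq\mathcal{M}$ be a $\sigma$-algebra on $X$ and $\mathcal{F},\mathcal{G}\subseteq\mathcal{U}$ be $\sigma$-algebras on $U$, such that $\mathcal{A}$ and $\mathcal{F}\cap\mathcal{G}$ are countably generated. Assume moreover that $(\mathcal{A}\otimes\mathcal{F})\cap(\mathcal{A}\otimes\mathcal{G})$ is countably generated and countably separated. Then $$(\mathcal{A}\otimes\mathcal{F})\cap(\mathcal{A}\otimes\mathcal{G})=\mathcal{A}\otimes(\mathcal{F}\cap\mathcal{G}).$$
   Context: A $\sigma$-algebra is countably generated if it is generated by an at most countable family of sets. A $\sigma$-algebra on a set $E$ is countably separated if it contains an at most countable family of sets $(M_n)$ separating the points of $E$ (for all $x\ne y$ there is $n$ with exactly one of $x,y$ in $M_n$). A measurable space $(X,\mathcal{M})$ is analytic if $X$ is isomorphic (via a bijective bimeasurable map) to an analytic subset of $[0,1]$ (a subset that is the continuous image of a Polish space) with its Borel $\sigma$-algebra, $\mathcal{M}$ is countably generated and $\mathcal{M}$ contains all singletons of $X$. $\otimes$ denotes the product $\sigma$-algebra generated by measurable rectangles. *)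

From HB Require Import structures.
From mathcomp Require Import all_boot all_order all_algebra.
From mathcomp Require Import all_classical all_reals all_analysis.
Set Implicit Arguments. Unset Strict Implicit. Unset Printing Implicit Defensive.
Import Order.TTheory GRing.Theory Num.Theory.
Import numFieldNormedType.Exports.
Local Open Scope classical_set_scope.
Local Open Scope ring_scope.

Definition is_sigma_algebra (T : Type) (F : set (set T)) : Prop :=
  sigma_algebra setT F.

Definition countably_generated (T : Type) (F : set (set T)) : Prop :=
  exists G : set (set T), countable G /\ F = <<s G >>.

Definition countably_separated (T : Type) (F : set (set T)) : Prop :=
  exists G : set (set T), [/\ countable G, G `<=` F &
    forall x y : T, x <> y -> exists2 M, G M & (M x /\ ~ M y) \/ (M y /\ ~ M x)].

Definition prod_sigma (X U : Type) (A : set (set X)) (F : set (set U))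
  : set (set (X * U)) :=
  <<s [set A1 `*` F1 | A1 in A & F1 in F] >>.

Definition polish (R : realType) (P : completePseudoMetricType R) : Prop :=
  hausdorff_space P /\ exists D : set P, countable D /\ closure D = setT.

Definition analytic_subset01 (R : realType) (S : set R) : Prop :=
  S `<=` `[0, 1] /\
  exists (P : completePseudoMetricType R) (f : P -> R),
    [/\ polish P, continuous f & range f = S].

(** (X, M) is analytic: isomorphic (via a bijective bimeasurable map) to an
    analytic subset S of [0,1] endowed with its Borel sigma-algebra (the trace
    of the Borel sets of R), M countably generated and containing singletons. *)
Definition analytic_space (R : realType) (X : Type) (M : set (set X)) : Prop :=
  [/\ (exists (S : set R) (f : X -> R),
         [/\ analytic_subset01 S, injective f, range f = S &
             forall A : set X, M A <-> exists2 B : set R, measurable B & A = f @^-1` B]),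
      countably_generated M &
      forall x : X, M [set x]].

From HB Require Import structures.
From mathcomp Require Import all_boot all_order all_algebra.
From mathcomp Require Import all_classical all_reals all_analysis.
From mathcomp Require Import lra measurable_realfun.
Set Implicit Arguments. Unset Strict Implicit. Unset Printing Implicit Defensive.
Import Order.TTheory GRing.Theory Num.Theory.
Import numFieldNormedType.Exports.
Local Open Scope classical_set_scope.
Local Open Scope ring_scope.

(* Blackwell's theorem does all the work.  Through the analytic structure, X and U
   are continuous images of Polish spaces P1 and P2, and every set of M ⊗ UU pulls
   back to a Borel subset of P1 × P2.  Countably many Borel sets of a Polish space
   become clopen in a finer Polish topology (Kuratowski's change of topology).  In
   such a topology, Lusin's separation argument shows that a countable family D of
   M ⊗ UU-sets separating points generates all of M ⊗ UU.  Applied to the separating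
   family of H := (A ⊗ F) ∩ (A ⊗ G) this gives M ⊗ UU ⊆ H; the sections of the
   rectangles m × U and X × u then show M ⊆ A and UU ⊆ F ∩ G, so that
   H ⊆ M ⊗ UU ⊆ A ⊗ (F ∩ G). *)

Lemma choice_default (A B : Type) (P : A -> B -> Prop) (b0 : B) :
  exists f : A -> B, forall a, (exists b, P a b) -> P a (f a).
Proof.
have [f fP] : {f : A -> B & forall a, (exists b, P a b) -> P a (f a)}.
  apply: (@choice A B (fun a b => (exists b, P a b) -> P a b)) => a.
  by case: (pselect (exists b, P a b)) => [[b Pab]|nP]; [exists b|exists b0].
by exists f.
Qed.

Lemma countable_range (T : Type) (D : set T) :
  countable D -> D !=set0 -> exists c : nat -> T, range c = D.
Proof.
move=> /countable_injP[f finj] [t0 Dt0].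
have /choice[c cP] : forall n, exists t, D t /\ forall t', D t' -> f t' = n -> t = t'.
  move=> n; case: (pselect (exists2 t, D t & f t = n)) => [[t Dt <-]|nex].
    by exists t; split=> // t' Dt' ftt'; apply: finj; rewrite ?inE.
  by exists t0; split=> // t' Dt' ft'n; case: nex; exists t'.
exists c; apply/seteqP; split=> [_ [n _ <-]|t Dt]; first by case: (cP n).
by exists (f t) => //; have [_] := cP (f t); apply.
Qed.

Lemma natSinv_lt (R : realType) (r : R) : 0 < r -> exists m : nat, m.+1%:R^-1 < r.
Proof.
by move=> r0; exists (Num.truncn r^-1); rewrite invf_plt ?posrE // truncnS_gt.
Qed.

Section SigmaAlgebra.
Context {T : Type} (S : set (set T)).
Hypothesis hS : sigma_algebra setT S.

Lemma sigmaC A : S A -> S (~` A).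
Proof. by case: hS => _ SD _ /SD; rewrite setTD. Qed.

Lemma sigmaT : S setT.
Proof. by rewrite -setC0; apply: sigmaC; case: hS. Qed.

Lemma sigma_bigcup (A : nat -> set T) : (forall n, S (A n)) -> S (\bigcup_n A n).
Proof. by case: hS => _ _; apply. Qed.

Lemma sigma_bigcap (A : nat -> set T) : (forall n, S (A n)) -> S (\bigcap_n A n).
Proof.
move=> SA; rewrite -[X in S X]setCK setC_bigcap.
by apply/sigmaC/sigma_bigcup => n; apply: sigmaC.
Qed.

Lemma sigmaI A B : S A -> S B -> S (A `&` B).
Proof.
by move=> SA SB; rewrite -bigcap2E; apply: sigma_bigcap => -[|[|n]] //=; apply: sigmaT.
Qed.

End SigmaAlgebra.

Section BallStructures.
Context {R : realType} {T : Type}.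
Implicit Types (b : T -> R -> T -> Prop) (s : nat -> T) (S : set T).

(* A pseudometric is encoded by its ball relation [b x e y] (y lies in the
   e-ball around x), so that one carrier type can be given several topologies. *)
Record ball_axioms b : Prop := BallAxioms {
  bxx : forall x e, 0 < e -> b x e x;
  bsym : forall x y e, b x e y -> b y e x;
  btriangle : forall x y z e1 e2, b x e1 y -> b y e2 z -> b x (e1 + e2) z }.

Definition bcauchy b s := forall e, 0 < e ->
  exists N, forall n m, (N <= n)%N -> (N <= m)%N -> b (s n) e (s m).

Definition bcvg b s x := forall e, 0 < e -> \forall n \near \oo, b x e (s n).

Definition bdense b (I : Type) (c : I -> T) := forall x e, 0 < e -> exists i, b x e (c i).

Record bpolish b : Prop := BPolish {
  bpolish_axioms : ball_axioms b;
  bpolish_complete : forall s, bcauchy b s -> exists x, bcvg b s x;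
  bpolish_separable : exists c : nat -> T, bdense b c }.

Definition bhausdorff b := forall x y, (forall e, 0 < e -> b x e y) -> x = y.

Definition bopen b S := forall x, S x -> exists2 e, 0 < e & forall y, b x e y -> S y.

Definition bclopen b S := bopen b S /\ bopen b (~` S).

Definition finer b' b := forall x e, 0 < e ->
  exists2 e', 0 < e' & forall y, b' x e' y -> b x e y.

Definition bcontinuous b (phi : T -> R) := forall x e, 0 < e ->
  exists2 d, 0 < d & forall y, b x d y -> `|phi x - phi y| < e.

Lemma bdense_count b (I : countType) (c : I -> T) (x0 : T) :
  bdense b c -> exists c' : nat -> T, bdense b c'.
Proof.
move=> dc; exists (fun n => oapp c x0 (unpickle n)) => x e /(dc x)[i bxi].
by exists (pickle i); rewrite pickleK.
Qed.

Lemma finer_refl b : finer b b.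
Proof. by move=> x e e0; exists e. Qed.

Lemma finer_trans b1 b2 b3 : finer b1 b2 -> finer b2 b3 -> finer b1 b3.
Proof.
move=> f12 f23 x e /(f23 x)[e' e'0 h23]; have [e'' e''0 h12] := f12 x e' e'0.
by exists e'' => // y /h12 /h23.
Qed.

Lemma finer_cvg b' b s x : finer b' b -> bcvg b' s x -> bcvg b s x.
Proof.
move=> fb sx e /(fb x)[e' e'0 h]; near=> n; apply: h; near: n; exact: sx.
Unshelve. all: end_near. Qed.

Lemma finer_open b' b S : finer b' b -> bopen b S -> bopen b' S.
Proof.
move=> fb oS x /oS[e e0 eS]; have [e' e'0 h] := fb x e e0.
by exists e' => // y /h /eS.
Qed.

Lemma finer_clopen b' b S : finer b' b -> bclopen b S -> bclopen b' S.
Proof. by move=> fb [oS oSC]; split; apply: finer_open fb _. Qed.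

Lemma bcvg_continuous b phi s x : bcontinuous b phi -> bcvg b s x ->
  phi (s n) @[n --> \oo] --> phi x.
Proof.
move=> phic sx; apply/cvgrPdist_lt => e /(phic x)[d d0 hd].
near=> n; apply: hd; near: n; exact: sx.
Unshelve. all: end_near. Qed.

Lemma bopen_cvg b S s x : bopen b S -> bcvg b s x -> S x -> \forall n \near \oo, S (s n).
Proof.
move=> oS sx /oS[e e0 eS]; near=> n; apply: eS; near: n; exact: sx.
Unshelve. all: end_near. Qed.

Lemma bopen_cvgN b S s x : bopen b S -> bcvg b s x ->
  (\forall n \near \oo, ~ S (s n)) -> ~ S x.
Proof.
move=> oS sx nS Sx; near \oo => n.
have : S (s n) by near: n; exact: bopen_cvg oS sx Sx.
by near: n; exact: nS.
Unshelve. all: end_near. Qed.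

Lemma bclosed_cvg b S s x : bopen b (~` S) -> bcvg b s x ->
  (\forall n \near \oo, S (s n)) -> S x.
Proof.
move=> oSC sx Ss; apply: contrapT => nSx.
near \oo => n.
have : S (s n) by near: n.
by near: n; exact: bopen_cvg oSC sx nSx.
Unshelve. all: end_near. Qed.

Section BallLemmas.
Variable b : T -> R -> T -> Prop.
Hypothesis hb : ball_axioms b.

Lemma ble x y e1 e2 : b x e1 y -> e1 <= e2 -> b x e2 y.
Proof.
move=> bxy; rewrite le_eqVlt => /predU1P[<- //|lt12].
have d0 : 0 < e2 - e1 by rewrite subr_gt0.
by have := btriangle hb bxy (bxx hb y d0); rewrite subrKC.
Qed.

Lemma btriangle_le x y z e1 e2 e : b x e1 y -> b y e2 z -> e1 + e2 <= e -> b x e z.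
Proof. by move=> bxy byz; apply: ble (btriangle hb bxy byz). Qed.

Lemma bcvg_unique s x y : bhausdorff b -> bcvg b s x -> bcvg b s y -> x = y.
Proof.
move=> hH sx sy; apply: hH => e e0.
have e20 : 0 < e / 2 by rewrite divr_gt0.
near \oo => n.
have bxn : b x (e / 2) (s n) by near: n; exact: sx.
have byn : b y (e / 2) (s n) by near: n; exact: sy.
by apply: btriangle_le bxn (bsym hb byn) _; rewrite -splitr.
Unshelve. all: end_near. Qed.

End BallLemmas.
End BallStructures.

Section Refine.
Context {R : realType} {T : Type} {I : countType}.
Variables (b : T -> R -> T -> Prop) (i : T -> I) (k : T -> R).

Definition refine_ball x e y := [/\ b x e y, i x = i y & `|k x - k y| < e].

Lemma refine_ball_axioms : ball_axioms b -> ball_axioms refine_ball.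
Proof.
move=> hb; split.
- by move=> x e e0; split; rewrite ?subrr ?normr0 //; apply: bxx.
- by move=> x y e [bxy ixy kxy]; split; rewrite 1?distrC //; apply: bsym.
- move=> x y z e1 e2 [bxy ixy kxy] [byz iyz kyz]; split; first exact: btriangle bxy byz.
    by rewrite ixy.
  by rewrite (le_lt_trans (ler_distD (k y) _ _)) // ltrD.
Qed.

Lemma finer_refine_ball : finer refine_ball b.
Proof. by move=> x e e0; exists e => // y []. Qed.

Lemma refine_ball_clopen S : (forall x y, i x = i y -> S x -> S y) -> bclopen refine_ball S.
Proof.
move=> Si; split=> x Sx; exists 1 => // y [_ ixy _]; first exact: Si ixy Sx.
by move=> Sy; apply: Sx; apply: Si Sy.
Qed.

Hypothesis hb : bpolish b.
Hypothesis refine_lim : forall s x j l, bcvg b s x ->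
  (\forall n \near \oo, i (s n) = j) -> k (s n) @[n --> \oo] --> l -> i x = j /\ k x = l.
Hypothesis refine_cont : forall x e, 0 < e ->
  exists2 d, 0 < d & forall y, b x d y -> i y = i x -> `|k x - k y| < e.

Let hb' := bpolish_axioms hb.

Lemma refine_ball_complete s : bcauchy refine_ball s -> exists x, bcvg refine_ball s x.
Proof.
move=> cs.
have cb : bcauchy b s.
  by move=> e /cs[N cN]; exists N => n m Nn Nm; have [] := cN n m Nn Nm.
have [x sx] := bpolish_complete hb cb.
have [N cN] := cs 1 ltr01.
have sj : \forall n \near \oo, i (s n) = i (s N).
  by exists N => // n /= Nn; have [_ -> _] := cN n N Nn (leqnn N).
have kl : cvg (k (s n) @[n --> \oo]).
  apply/cauchy_cvgP/cauchy_exP => e /cs[M cM]; exists (k (s M)).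
  by exists M => // n /= Mn; have [] := cM M n (leqnn M) Mn.
have [ix kx] := refine_lim sx sj kl.
exists x => e e0; near=> n; split.
- by near: n; exact: sx.
- by rewrite ix; apply/esym; near: n.
- by rewrite kx; near: n; move/cvgrPdist_lt : kl; apply.
Unshelve. all: end_near. Qed.

Lemma refine_ball_separable : exists c : nat -> T, bdense refine_ball c.
Proof.
have [c dc] := bpolish_separable hb.
pose P (p : nat * nat * I) y := b (c p.1.1) p.1.2.+1%:R^-1 y /\ i y = p.2.
have [pick pickP] := choice_default P (c 0%N).
suff /(bdense_count (c 0%N)) : bdense refine_ball pick by [].
move=> x e e0.
have [d d0 kd] := refine_cont x e0.
have r0 : 0 < Num.min d e / 2 by rewrite divr_gt0 // lt_min d0 e0.
have [m mr] := natSinv_lt r0.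
have m0 : 0 < m.+1%:R^-1 :> R by rewrite invr_gt0.
have [a bxa] := dc x _ m0.
have [bay iy] : b (c a) m.+1%:R^-1 (pick (a, m, i x)) /\ i (pick (a, m, i x)) = i x.
  by apply: (pickP (a, m, i x)); exists x; split => //=; exact: (bsym hb' bxa).
set y := pick (a, m, i x).
have bxy : b x (Num.min d e) y.
  by apply: (btriangle_le hb' bxa bay); rewrite [Num.min d e]splitr lerD // ltW.
exists (a, m, i x); split; last 1 first.
- by apply: kd => //; apply: (ble hb' bxy); rewrite ge_min lexx.
- by apply: (ble hb' bxy); rewrite ge_min lexx orbT.
- by rewrite iy.
Qed.

Lemma refine_ball_polish : bpolish refine_ball.
Proof.
split; [exact: refine_ball_axioms|exact: refine_ball_complete|exact: refine_ball_separable].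
Qed.

End Refine.

Section Superlevel.
Context {R : realType} {T : Type}.
Variables (b : T -> R -> T -> Prop) (phi : T -> R) (q : R).
Hypotheses (hb : bpolish b) (phic : bcontinuous b phi).

Let superlevel x := q < phi x.
(* As for open subsets of Polish spaces, the coordinate 1 / (phi - q) blows up at
   the boundary of [q < phi], which keeps the refined space complete. *)
Let inv_gap x := if q < phi x then (phi x - q)^-1 else 0.

Lemma superlevel_polish : bpolish (refine_ball b superlevel inv_gap).
Proof.
apply: refine_ball_polish => // [s x j l sx sj kl|x e e0].
  have phix := bcvg_continuous phic sx.
  rewrite /superlevel /inv_gap; case: j sj => sj.
    have gap1 : inv_gap (s n) * (phi (s n) - q) @[n --> \oo] --> (1 : R).
      apply: cvg_near_cst; near=> n; have qn : q < phi (s n) by near: n.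
      by rewrite /inv_gap qn mulVf // subr_eq0 gt_eqF.
    have l1 : l * (phi x - q) = 1.
      exact: cvg_unique _ (cvgM kl (cvgB phix (cvg_cst q))) gap1.
    have qx : q < phi x.
      rewrite lt_neqAle (cvgr_to_ge phix) ?andbT; last by near=> n; apply/ltW; near: n.
      by apply/eqP => qxE; move: l1; rewrite -qxE subrr mulr0 => /esym/eqP; rewrite oner_eq0.
    by rewrite qx; split=> //; rewrite -[LHS]mul1r -l1 mulfK // subr_eq0 gt_eqF.
  have xq : phi x <= q.
    by apply: (cvgr_to_le phix); near=> n; rewrite leNgt; apply/negbT; near: n.
  have gap0 : inv_gap (s n) @[n --> \oo] --> (0 : R).
    by apply: cvg_near_cst; near=> n; rewrite /inv_gap ifF //; near: n.
  by rewrite ltNge xq; split=> //=; apply: cvg_unique _ gap0 kl.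
case qx : (q < phi x); last first.
  by exists 1 => // y _; rewrite /superlevel /inv_gap qx => ->; rewrite subrr normr0.
have gapc : {for phi x, continuous (fun t => (t - q)^-1)}.
  by apply: continuousV; [rewrite subr_eq0 gt_eqF|apply: cvgB; [apply: cvg_id|apply: cvg_cst]].
move/cvgrPdist_lt/(_ e e0)/nbhs_ballP : gapc => -[d1 d10 hd1].
have [d d0 hd] := phic x d10.
exists d => // y bxy; rewrite /superlevel /inv_gap qx => ->.
by apply: hd1; rewrite -ball_normE /=; apply: hd.
Unshelve. all: end_near. Qed.

Lemma superlevel_clopen : bclopen (refine_ball b superlevel inv_gap) [set x | q < phi x].
Proof. by apply: refine_ball_clopen => x y; rewrite /superlevel /= => ->. Qed.

End Superlevel.

Section Join.
Context {R : realType} {T : Type}.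
Variable bs : nat -> T -> R -> T -> Prop.
Hypothesis hbs : forall n, ball_axioms (bs n).

(* The e-ball of the join is the intersection of the e-balls of the first 1/e
   structures, so its topology is the supremum of their topologies. *)
Definition bjoin x e y := 0 < e /\ forall n, e * n%:R < 1 -> bs n x e y.

Lemma bjoin_axioms : ball_axioms bjoin.
Proof.
split.
- by move=> x e e0; split=> // n _; apply: bxx.
- by move=> x y e [e0 bxy]; split=> // n /bxy; apply: bsym.
- move=> x y z e1 e2 [e10 bxy] [e20 byz]; split=> [|n]; first exact: addr_gt0.
  rewrite mulrDl => n12.
  have n1 : e1 * n%:R < 1 by apply: le_lt_trans n12; rewrite lerDl mulr_ge0 // ltW.
  have n2 : e2 * n%:R < 1 by apply: le_lt_trans n12; rewrite lerDr mulr_ge0 // ltW.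
  exact: (btriangle (hbs n) (bxy n n1) (byz n n2)).
Qed.

Let join_radius n e : R := Num.min e n.+1%:R^-1.

Lemma join_radius_gt0 n e : 0 < e -> 0 < join_radius n e.
Proof. by move=> e0; rewrite /join_radius lt_min e0 invr_gt0 ltr0Sn. Qed.

Lemma bjoin_bs n x y e : bjoin x (join_radius n e) y -> bs n x e y.
Proof.
move=> [_ bxy].
have small : join_radius n e * n%:R < 1.
  apply: (@le_lt_trans _ _ (n.+1%:R^-1 * n%:R)).
    by apply: ler_wpM2r; rewrite ?ler0n // ge_min lexx orbT.
  by rewrite mulrC ltr_pdivrMr ?ltr0Sn // mul1r ltr_nat.
by apply: (ble (hbs n) (bxy n small)); rewrite ge_min lexx.
Qed.

Lemma finer_bjoin n : finer bjoin (bs n).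
Proof.
move=> x e e0; exists (join_radius n e); first exact: join_radius_gt0.
by move=> y /bjoin_bs.
Qed.

Lemma bjoin_index_bound (e : R) : 0 < e -> exists K, forall n, e * n%:R < 1 -> (n < K)%N.
Proof.
move=> e0; have ei : 0 <= e^-1 by rewrite invr_ge0 ltW.
exists (Num.bound e^-1) => n en; rewrite -(ltr_nat R).
apply: le_lt_trans (archi_boundP ei).
by rewrite -(ler_pM2l e0) mulfV ?lt0r_neq0 // ltW.
Qed.

Variables (b0 : T -> R -> T -> Prop).
Hypotheses (hb0 : ball_axioms b0) (hH : bhausdorff b0).
Hypotheses (pbs : forall n, bpolish (bs n)) (fbs : forall n, finer (bs n) b0).

Lemma bjoin_complete s : bcauchy bjoin s -> exists x, bcvg bjoin s x.
Proof.
move=> cs.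
have csn n : bcauchy (bs n) s.
  move=> e e0; have [N cN] := cs _ (join_radius_gt0 n e0).
  by exists N => m m' Nm Nm'; apply: bjoin_bs; apply: cN.
have /choice[xs sxs] n : exists x, bcvg (bs n) s x := bpolish_complete (pbs n) (csn n).
have xsE n : xs n = xs 0%N.
  by apply: (bcvg_unique hb0 hH); apply: finer_cvg (fbs _) (sxs _).
exists (xs 0%N) => e e0; have [K hK] := bjoin_index_bound e0.
have : \forall m \near \oo, forall n : 'I_K, bs n (xs 0%N) e (s m).
  by apply: filter_forall => n; rewrite -(xsE n); apply: sxs.
by apply: filterS => m sm; split=> // n /hK nK; apply: (sm (Ordinal nK)).
Qed.

Lemma bjoin_separable : exists c : nat -> T, bdense bjoin c.
Proof.
have /choice[cs dcs] n : exists c : nat -> T, bdense (bs n) c := bpolish_separable (pbs n).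
pose P (p : nat * seq nat) y :=
  forall n, (n < size p.2)%N -> bs n (cs n (nth 0%N p.2 n)) p.1.+1%:R^-1 y.
have [pick pickP] := choice_default P (cs 0%N 0%N).
suff /(bdense_count (cs 0%N 0%N)) : bdense bjoin pick by [].
move=> x e e0; have [K hK] := bjoin_index_bound e0.
have [m me] := natSinv_lt (divr_gt0 e0 (ltr0Sn _ 1)).
have m0 : 0 < m.+1%:R^-1 :> R by rewrite invr_gt0.
have /choice[g hg] n : exists j, bs n x m.+1%:R^-1 (cs n j) := dcs n x _ m0.
have Py : P (m, mkseq g K) (pick (m, mkseq g K)).
  apply: pickP; exists x => n; rewrite size_mkseq => nK.
  by rewrite nth_mkseq //; exact: (bsym (hbs n) (hg n)).
exists (m, mkseq g K); split=> // n /hK nK.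
have := Py n; rewrite /= size_mkseq nth_mkseq // => /(_ nK) gy.
by apply: (btriangle_le (hbs n) (hg n) gy); rewrite [e]splitr lerD // ltW.
Qed.

Lemma bjoin_polish : bpolish bjoin.
Proof. by split; [exact: bjoin_axioms|exact: bjoin_complete|exact: bjoin_separable]. Qed.

End Join.

Section FirstIndex.
Context {T : Type} (Bs : nat -> set T).

(* The fibres of the first index are the cells of the partition generated by
   the [Bs n]; they are closed as soon as every [Bs n] is clopen. *)
Definition first_index x (j : option nat) : Prop :=
  if j is Some n then Bs n x /\ forall m, (m < n)%N -> ~ Bs m x
  else forall n, ~ Bs n x.

Lemma first_index_exists x : exists j, first_index x j.
Proof.
have [[n Bn]|nB] := pselect (exists n, Bs n x); last first.
  by exists None => n Bn; apply: nB; exists n.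
have exB : exists n, `[< Bs n x >] by exists n; apply/asboolP.
case: (ex_minnP exB) => m /asboolP Bm minm; exists (Some m); split=> // m' m'm Bm'.
by have := minm m' (asboolT Bm'); rewrite leqNgt m'm.
Qed.

Lemma first_index_unique x j j' : first_index x j -> first_index x j' -> j = j'.
Proof.
case: j j' => [n|] [n'|] //=; [|by move=> [Bn _] /(_ n)|by move=> nB [/nB]].
move=> [Bn minn] [Bn' minn']; congr Some.
by case: (ltngtP n n') => // [/minn'|/minn].
Qed.

Lemma bigcup_first_index x j : first_index x j -> (\bigcup_n Bs n) x <-> j != None.
Proof.
case: j => [n [Bn _]|nB] /=; split => //; first by exists n.
by move=> [n _ /nB].
Qed.

Lemma first_index_cvg (R : realType) (b : T -> R -> T -> Prop) s x j :
  (forall n, bclopen b (Bs n)) -> bcvg b s x ->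
  (\forall n \near \oo, first_index (s n) j) -> first_index x j.
Proof.
move=> Bc sx sj; case: j sj => [n|] /= sj.
  split; first by apply: bclosed_cvg (Bc n).2 sx _; apply: filterS sj => m [].
  move=> m mn; apply: bopen_cvgN (Bc m).1 sx _.
  by apply: filterS sj => k [_]; apply.
by move=> n; apply: bopen_cvgN (Bc n).1 sx _; apply: filterS sj => k; apply.
Qed.

End FirstIndex.

Section Clopenable.
Context {R : realType} {T : Type}.
Variable b0 : T -> R -> T -> Prop.
Hypotheses (pb0 : bpolish b0) (hH : bhausdorff b0).

Definition clopenable S := exists b, [/\ bpolish b, finer b b0 & bclopen b S].

Lemma clopenable_join (Bs : nat -> set T) : (forall n, clopenable (Bs n)) ->
  exists b, [/\ bpolish b, finer b b0 & forall n, bclopen b (Bs n)].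
Proof.
move=> /choice[bs hbs]; have hb0 := bpolish_axioms pb0.
have pbs n : bpolish (bs n) by have [] := hbs n.
have fbs n : finer (bs n) b0 by have [] := hbs n.
have hbs' n := bpolish_axioms (pbs n).
exists (bjoin bs); split; first exact: bjoin_polish hb0 hH pbs fbs.
  exact: finer_trans (finer_bjoin hbs' 0) (fbs 0%N).
by move=> n; apply: finer_clopen (finer_bjoin hbs' n) _; have [] := hbs n.
Qed.

Lemma clopenable_bigcup (Bs : nat -> set T) : (forall n, clopenable (Bs n)) ->
  clopenable (\bigcup_n Bs n).
Proof.
move=> /clopenable_join[b [pb fb Bc]].
have [i iP] := choice (first_index_exists Bs).
exists (refine_ball b i (fun=> 0)); split.
- apply: refine_ball_polish => // [s x j l sx sj kl|x e e0].
    have sj' : \forall n \near \oo, first_index Bs (s n) j by apply: filterS sj => n <-.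
    split; first exact: first_index_unique (iP x) (first_index_cvg Bc sx sj').
    by apply: cvg_unique _ (cvg_cst 0) kl.
  by exists 1 => // y _ _; rewrite subrr normr0.
- exact: finer_trans (finer_refine_ball _ _ _) fb.
- by apply: refine_ball_clopen => x y ixy; rewrite !(bigcup_first_index (iP _)) ixy.
Qed.

Lemma clopenable_sigma : sigma_algebra setT clopenable.
Proof.
split.
- exists b0; split=> //; first exact: finer_refl.
  by split=> x; [case|exists 1 => // y _ []].
- move=> A [b [pb fb [oA oAC]]]; exists b; split=> //.
  by rewrite setTD; split=> //; rewrite setCK.
- exact: clopenable_bigcup.
Qed.

Lemma clopenable_superlevel (phi : T -> R) q : bcontinuous b0 phi ->
  clopenable [set x | q < phi x].
Proof.
move=> phic; eexists; split; last exact: superlevel_clopen.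
  exact: superlevel_polish.
exact: finer_refine_ball.
Qed.

Lemma clopenable_preimage (phi : T -> R) (B : set R) : bcontinuous b0 phi ->
  measurable B -> clopenable (phi @^-1` B).
Proof.
move=> phic mB; rewrite -[_ @^-1` _]setTI.
have GB : (@RGenOInfty.G R).-sigma.-measurable B by rewrite -RGenOInfty.measurableE.
suff GX : @RGenOInfty.G R `<=` image_set_system setT phi clopenable.
  exact: (smallest_sub (sigma_algebra_image phi clopenable_sigma) GX GB).
move=> _ [q ->]; rewrite /image_set_system /= setTI (_ : _ @^-1` _ = [set x | q < phi x]).
  exact: clopenable_superlevel.
by apply/seteqP; split=> x /=; rewrite in_itv /= andbT.
Qed.

End Clopenable.

Lemma decreasing_sub (T : Type) (A : nat -> set T) :
  (forall n, A n.+1 `<=` A n) -> forall m n, (m <= n)%N -> A n `<=` A m.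
Proof.
move=> Adec m n /subnK <-; elim: (n - m)%N => [//|k IH].
by rewrite addSn; apply: subset_trans (Adec _) IH.
Qed.

Section Separation.
Context {R : realType} {T : Type}.
Variables (b : T -> R -> T -> Prop) (S : set (set T)).
Hypotheses (pb : bpolish b) (hS : sigma_algebra setT S).

Let hb := bpolish_axioms pb.

Definition separated (A1 A2 : set T) := exists W, [/\ S W, A1 `<=` W & A2 `<=` ~` W].

Lemma separatedS A1 A2 B1 B2 : A1 `<=` B1 -> A2 `<=` B2 ->
  separated B1 B2 -> separated A1 A2.
Proof.
move=> AB1 AB2 [W [SW BW1 BW2]]; exists W.
by split=> //; [apply: subset_trans BW1|apply: subset_trans BW2].
Qed.

Lemma separated_bigcup (A1 A2 : nat -> set T) :
  (forall i j, separated (A1 i) (A2 j)) -> separated (\bigcup_i A1 i) (\bigcup_j A2 j).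
Proof.
move=> sepA; have [W WP] := choice (fun ij : nat * nat => sepA ij.1 ij.2).
exists (\bigcup_i \bigcap_j W (i, j)); split.
- by apply: sigma_bigcup => // i; apply: sigma_bigcap => // j; case: (WP (i, j)).
- by move=> x [i _ A1x]; exists i => // j _; case: (WP (i, j)) => _ /(_ x A1x).
- by move=> x [j _ A2x] [i _ /(_ j I)]; case: (WP (i, j)) => _ _ /(_ x A2x).
Qed.

Lemma not_separated_neq0 A1 A2 : ~ separated A1 A2 -> A1 !=set0 /\ A2 !=set0.
Proof.
move=> nsep; split; apply: contrapT => nA; apply: nsep.
  exists set0; split=> [|x A1x|x _ []]; first by case: hS.
  by case: nA; exists x.
exists setT; split=> [|//|x A2x _]; first exact: sigmaT.
by case: nA; exists x.
Qed.

Definition shrinks (r : R) (A B : bool -> set T) :=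
  ~ separated (B true) (B false) /\ forall i, B i `<=` A i /\ exists z, B i `<=` b z r.

Lemma not_separated_shrink r (A : bool -> set T) : 0 < r ->
  ~ separated (A true) (A false) -> exists B, shrinks r A B.
Proof.
move=> r0 nsep; have [c dc] := bpolish_separable pb.
pose C i n := A i `&` b (c n) r.
have [[n1 n2] nsep12] : exists n12 : nat * nat, ~ separated (C true n12.1) (C false n12.2).
  apply: contrapT => /forallNP sep12; apply: nsep.
  have cover i : A i `<=` \bigcup_n C i n.
    move=> x Ax; have [n bxn] := dc x r r0.
    by exists n => //; split=> //; exact: (bsym hb bxn).
  apply: separatedS (cover true) (cover false) (separated_bigcup _) => i j.
  by apply: contrapT => nij; apply: (sep12 (i, j)).
exists (fun i => C i (if i then n1 else n2)); split=> // i.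
by split; [move=> x []|exists (c (if i then n1 else n2)) => x []].
Qed.

Lemma shrinking_point (A : nat -> set T) :
  (forall n, A n.+1 `<=` A n) -> (forall n, A n !=set0) ->
  (forall e, 0 < e -> exists n z, A n `<=` b z e) ->
  exists p, forall V, bopen b V -> V p -> exists n, A n `<=` V.
Proof.
move=> Adec /choice[a aA] Asmall.
have aAm m n : (m <= n)%N -> A m (a n).
  by move=> mn; apply: decreasing_sub Adec _ _ mn _ (aA n).
have [p ap] : exists p, bcvg b a p.
  apply: (bpolish_complete pb) => e e0.
  have [N [z Nz]] := Asmall (e / 2) (divr_gt0 e0 (ltr0Sn _ 1)).
  exists N => n m Nn Nm; apply: (btriangle_le hb (bsym hb (Nz _ (aAm _ _ Nn)))).
    exact: Nz _ (aAm _ _ Nm).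
  by rewrite -splitr.
exists p => V oV Vp; have [e e0 eV] := oV p Vp.
have e3 : 0 < e / 3 by rewrite divr_gt0.
have [N [z Nz]] := Asmall _ e3.
exists N => y Ay; apply: eV.
near \oo => n.
have pn : b p (e / 3) (a n) by near: n; exact: ap _ e3.
have Nn : (N <= n)%N by near: n; exists N.
have zn : b z (e / 3) (a n) := Nz _ (aAm _ _ Nn).
apply: (btriangle_le hb pn (btriangle hb (bsym hb zn) (Nz _ Ay))).
lra.
Unshelve. all: end_near. Qed.

(* Lusin's argument: shrinking a non-separated pair along balls of radius 1/(k+1)
   yields limit points no pair of whose neighbourhoods can be separated. *)
Lemma not_separated_points (A : bool -> set T) :
  (forall i, bopen b (~` A i)) -> ~ separated (A true) (A false) ->
  exists p : bool -> T, (forall i, A i (p i)) /\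
    forall V : bool -> set T, (forall i, bopen b (V i) /\ V i (p i)) ->
    ~ separated (V true) (V false).
Proof.
move=> Aclosed nsepA.
have /choice[step stepP] : forall kA : nat * (bool -> set T), exists B,
    ~ separated (kA.2 true) (kA.2 false) -> shrinks kA.1.+1%:R^-1 kA.2 B.
  move=> [k A']; have [sepA'|nsepA'] := pselect (separated (A' true) (A' false)).
    by exists A'.
  have k0 : 0 < k.+1%:R^-1 :> R by rewrite invr_gt0.
  by have [B A'B] := not_separated_shrink k0 nsepA'; exists B.
pose fix AA k := if k is k'.+1 then step (k', AA k') else A.
have nsepAA k : ~ separated (AA k true) (AA k false).
  by elim: k => [//|k IH]; have [] := stepP (k, AA k) IH.
have shAA k : shrinks k.+1%:R^-1 (AA k) (AA k.+1) := stepP (k, AA k) (nsepAA k).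
have AAdec i m n : (m <= n)%N -> AA n i `<=` AA m i.
  by apply: (decreasing_sub (A := AA^~ i)) => k; have [_ /(_ i) []] := shAA k.
have AAneq0 k i : AA k i !=set0.
  by have [] := not_separated_neq0 (nsepAA k); case: i.
have /choice[p pP] i : exists p, forall V, bopen b V -> V p -> exists n, AA n i `<=` V.
  apply: shrinking_point => [n|//|e e0]; first exact: AAdec.
  have [m me] := natSinv_lt e0; have [_ /(_ i) [_ [z Az]]] := shAA m.
  by exists m.+1, z => y /Az bzy; exact: (ble hb bzy (ltW me)).
exists p; split=> [i|V Vp [W [SW V1W V2W]]].
  apply: contrapT => nAp; have [n AnC] := pP i _ (Aclosed i) nAp.
  by have [x AAx] := AAneq0 n i; apply: (AnC x AAx); apply: (AAdec i 0%N n).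
have [n1 A1V] := pP true _ (Vp true).1 (Vp true).2.
have [n2 A2V] := pP false _ (Vp false).1 (Vp false).2.
apply: (nsepAA (maxn n1 n2)); exists W; split=> //.
  exact: subset_trans (AAdec true _ _ (leq_maxl n1 n2)) (subset_trans A1V V1W).
exact: subset_trans (AAdec false _ _ (leq_maxr n1 n2)) (subset_trans A2V V2W).
Qed.

Theorem saturated_clopen_measurable (Qs : set (set T)) (Q : set T) :
  (forall W, Qs W -> bclopen b W /\ S W) -> bclopen b Q ->
  (forall x y, (forall W, Qs W -> (W x <-> W y)) -> Q x -> Q y) -> S Q.
Proof.
move=> hQs [oQ oQC] Qsat; apply: contrapT => nSQ.
have nsep : ~ separated Q (~` Q).
  move=> [W [SW QW QCW]]; apply: nSQ; suff -> : Q = W by [].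
  by apply/seteqP; split=> // x Wx; apply: contrapT => /QCW.
have QQclosed (i : bool) : bopen b (~` (if i then Q else ~` Q)).
  by case: i; rewrite ?setCK.
have [p [pQ pV]] := not_separated_points QQclosed nsep.
have [W QsW pW] : exists2 W, Qs W & ~ (W (p true) <-> W (p false)).
  apply: contrapT => nW; apply: (pQ false); apply: Qsat (pQ true) => W QsW.
  by apply: contrapT => nWp; apply: nW; exists W.
have [U [SU oU oUC] [Up1 Up2]] : exists2 U, [/\ S U, bopen b U & bopen b (~` U)] &
    U (p true) /\ ~ U (p false).
  have [[oW oWC] SW] := hQs W QsW.
  have [Wp1|nWp1] := pselect (W (p true)).
    by exists W => //; split=> // Wp2; apply: pW.
  exists (~` W); first by rewrite setCK; split=> //; exact: sigmaC.
  by split=> // nWp2; apply: pW; split=> // /nWp1.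
apply: (pV (fun i => if i then U else ~` U)); first by case.
by exists U; split=> //= x ?.
Qed.

End Separation.

Theorem blackwell {R : realType} {T Z : Type} (b : T -> R -> T -> Prop) (h : T -> Z)
    (D : set (set Z)) (E : set Z) :
  bpolish b -> bhausdorff b -> (forall z, exists x, h x = z) -> countable D ->
  (forall z z', z <> z' -> exists2 W, D W & ~ (W z <-> W z')) ->
  (forall W, D W -> clopenable b (h @^-1` W)) -> clopenable b (h @^-1` E) ->
  <<s D >> E.
Proof.
move=> pb hH hsurj cD sepD cDh cEh.
have [c cE] : exists c : nat -> set Z, range c = [set E] `|` D.
  apply: countable_range; last by exists E; left.
  rewrite -bigcup2E; apply: bigcup_countable (countableP _) _ => -[|[|n]] _ //=;
    exact: countable1.
have cch n : clopenable b (h @^-1` c n).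
  have : ([set E] `|` D) (c n) by rewrite -cE; exists n.
  by case=> [->|/cDh].
have [b' [pb' _ cc]] := clopenable_join pb hH cch.
have cl W : ([set E] `|` D) W -> bclopen b' (h @^-1` W) by rewrite -cE => -[n _ <-].
pose SD := preimage_set_system setT h <<s D >>.
have sSD : sigma_algebra setT SD := sigma_algebra_preimage _ _ (smallest_sigma_algebra _ _).
have [W DW hW] : SD (h @^-1` E).
  apply: (saturated_clopen_measurable pb' sSD (Qs := [set h @^-1` W | W in D])).
  - move=> _ [W DW <-]; split; first by apply: cl; right.
    by exists W; [exact: sub_sigma_algebra|exact: setTI].
  - by apply: cl; left.
  - move=> x y sat; rewrite /preimage /=; suff -> : h y = h x by [].
    apply: contrapT => /sepD[W DW nW]; apply: nW.
    have hsat : (h @^-1` W) x <-> (h @^-1` W) y by apply: sat; exists W.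
    by case: hsat; split.
suff -> : E = W by [].
rewrite setTI in hW; apply/seteqP; split=> z; have [x <-] := hsurj z.
  by have /= -> := congr1 (@^~ x) hW.
by have /= -> := congr1 (@^~ x) hW.
Qed.

Section PseudoMetricBalls.
Context {R : realType} (P : completePseudoMetricType R).

Lemma ball_axioms_ball : ball_axioms (@ball R P).
Proof.
split=> [x e|x y e|x y z e1 e2]; [exact: ballxx|exact: ball_sym|exact: ball_triangle].
Qed.

Lemma ball_bhausdorff : hausdorff_space P -> bhausdorff (@ball R P).
Proof.
rewrite ball_hausdorff => hP x y bxy; apply/eqP; apply: contraT => /hP[[r1 r2]] /eqP.
rewrite -subset0 => r12.
by have [] : (set0 : set P) y by apply: r12; split; [exact: bxy|exact: ballxx].
Qed.

Lemma ball_bpolish (x0 : P) : polish P -> bpolish (@ball R P).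
Proof.
move=> [_ [D [cD DT]]]; split; first exact: ball_axioms_ball.
  move=> s cs; have sc : cvg (s @ \oo).
    apply/cauchy_cvgP/cauchy_exP => e /cs[N cN]; exists (s N).
    by exists N => // n /= Nn; apply: cN.
  by exists (lim (s @ \oo)) => e e0; exact: (cvg_ball sc e0).
have Dx x e : 0 < e -> exists2 y, D y & ball x e y.
  move=> e0; have : closure D x by rewrite DT.
  by move=> /(_ _ (nbhsx_ballx x e e0))[y [Dy bxy]]; exists y.
have [y0 Dy0 _] := Dx x0 1 ltr01.
have [c cD'] := countable_range cD (ex_intro _ y0 Dy0).
exists c => x e /(Dx x)[y + bxy]; rewrite -cD' => -[n _ cny].
by exists n; rewrite cny.
Qed.

Lemma continuous_bcontinuous (f : P -> R) : continuous f -> bcontinuous (@ball R P) f.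
Proof.
move=> fc x e e0; have [d d0 hd] := iffLR (nbhs_ballP _ _) (cvg_ball (fc x) e0).
by exists d => // y /hd.
Qed.

End PseudoMetricBalls.

Section ProductBalls.
Context {R : realType} {T1 T2 : Type}.
Variables (b1 : T1 -> R -> T1 -> Prop) (b2 : T2 -> R -> T2 -> Prop).

Definition bprod (x : T1 * T2) e (y : T1 * T2) := b1 x.1 e y.1 /\ b2 x.2 e y.2.

Lemma bprod_axioms : ball_axioms b1 -> ball_axioms b2 -> ball_axioms bprod.
Proof.
move=> h1 h2; split.
- by move=> x e e0; split; [exact: (bxx h1 _ e0)|exact: (bxx h2 _ e0)].
- by move=> x y e [bxy1 bxy2]; split; [exact: (bsym h1 bxy1)|exact: (bsym h2 bxy2)].
- move=> x y z e1 e2 [bxy1 bxy2] [byz1 byz2].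
  by split; [exact: (btriangle h1 bxy1 byz1)|exact: (btriangle h2 bxy2 byz2)].
Qed.

Lemma bprod_hausdorff : bhausdorff b1 -> bhausdorff b2 -> bhausdorff bprod.
Proof.
move=> H1 H2 [x1 x2] [y1 y2] bxy.
by congr (_, _); [apply: H1|apply: H2] => e /bxy[].
Qed.

Lemma bprod_polish : bpolish b1 -> bpolish b2 -> bpolish bprod.
Proof.
move=> p1 p2; split; first exact: bprod_axioms (bpolish_axioms p1) (bpolish_axioms p2).
  move=> s cs.
  have cs1 : bcauchy b1 (fst \o s).
    by move=> e /cs[N cN]; exists N => n m Nn Nm; have [] := cN n m Nn Nm.
  have cs2 : bcauchy b2 (snd \o s).
    by move=> e /cs[N cN]; exists N => n m Nn Nm; have [] := cN n m Nn Nm.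
  have [x1 sx1] := bpolish_complete p1 cs1; have [x2 sx2] := bpolish_complete p2 cs2.
  exists (x1, x2) => e e0; near=> n; split; near: n; [exact: sx1|exact: sx2].
have [c1 d1] := bpolish_separable p1; have [c2 d2] := bpolish_separable p2.
suff /(bdense_count (c1 0%N, c2 0%N)) :
    bdense bprod (fun ij : nat * nat => (c1 ij.1, c2 ij.2)) by [].
move=> [x1 x2] e e0; have [i bi] := d1 x1 e e0; have [j bj] := d2 x2 e e0.
by exists (i, j).
Unshelve. all: end_near. Qed.

Lemma bcontinuous_fst (phi : T1 -> R) : bcontinuous b1 phi -> bcontinuous bprod (phi \o fst).
Proof. by move=> phic x e /(phic x.1)[d d0 hd]; exists d => // y [/hd]. Qed.

Lemma bcontinuous_snd (phi : T2 -> R) : bcontinuous b2 phi -> bcontinuous bprod (phi \o snd).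
Proof. by move=> phic x e /(phic x.2)[d d0 hd]; exists d => // y [_ /hd]. Qed.

End ProductBalls.

Section ProductSigma.
Context {X U : Type}.
Implicit Types (A : set (set X)) (F : set (set U)).

Lemma prod_sigmaS A A' F F' : A `<=` A' -> F `<=` F' -> prod_sigma A F `<=` prod_sigma A' F'.
Proof.
move=> AA' FF'; apply: sub_sigma_algebra2 => _ [a Aa [f Ff <-]].
by exists a; [exact: AA'|exists f; [exact: FF'|]].
Qed.

Lemma prod_sigma_preimage (Y : Type) (C : set (set Y)) A F (h : Y -> X * U) :
  sigma_algebra setT C -> (forall a f, A a -> F f -> C (h @^-1` (a `*` f))) ->
  forall E, prod_sigma A F E -> C (h @^-1` E).
Proof.
move=> sC Crect E PE; rewrite -[_ @^-1` _]setTI.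
suff GX : [set a `*` f | a in A & f in F] `<=` image_set_system setT h C.
  exact: (smallest_sub (sigma_algebra_image h sC) GX PE).
by move=> _ [a Aa [f Ff <-]]; rewrite /image_set_system /= setTI; apply: Crect.
Qed.

Lemma prod_sigma_rect_fst A F a f : sigma_algebra setT A -> f !=set0 ->
  prod_sigma A F (a `*` f) -> A a.
Proof.
move=> sA [u fu] /(prod_sigma_preimage (h := fun x => (x, u)) sA) aA.
have -> : a = (fun x => (x, u)) @^-1` (a `*` f) by apply/seteqP; split=> [x|x []].
apply: aA => a' f' Aa' _; have [f'u|nf'u] := pselect (f' u).
  by rewrite (_ : _ @^-1` _ = a') //; apply/seteqP; split=> [x []|x].
by rewrite (_ : _ @^-1` _ = set0); [case: sA|apply/seteqP; split=> x // []].
Qed.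

Lemma prod_sigma_rect_snd A F a f : sigma_algebra setT F -> a !=set0 ->
  prod_sigma A F (a `*` f) -> F f.
Proof.
move=> sF [x ax] /(prod_sigma_preimage (h := fun u => (x, u)) sF) fF.
have -> : f = (fun u => (x, u)) @^-1` (a `*` f) by apply/seteqP; split=> [u|u []].
apply: fF => a' f' _ Ff'; have [a'x|na'x] := pselect (a' x).
  by rewrite (_ : _ @^-1` _ = f') //; apply/seteqP; split=> [u []|u].
by rewrite (_ : _ @^-1` _ = set0); [case: sF|apply/seteqP; split=> u // []].
Qed.

End ProductSigma.

Section AnalyticSpaces.
Context {R : realType} {X : Type} (M : set (set X)).
Hypothesis hM : analytic_space R M.

Lemma analytic_spaceT : M setT.
Proof.
have [[S [f [_ _ _ MB]]] _ _] := hM.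
by apply/MB; exists setT; [exact: measurableT|rewrite preimage_setT].
Qed.

Lemma analytic_space_param : exists (P : completePseudoMetricType R) (g : P -> X) (f : P -> R),
  [/\ polish P, (forall x, exists p, g p = x), continuous f &
      forall W, M W -> exists2 B, measurable B & g @^-1` W = f @^-1` B].
Proof.
have [[S [f [[_ [P [f1 [pol cf1 rf1]]]] finj rf MB]]] _ _] := hM.
have /choice[g gf] p : exists x, f x = f1 p.
  have [x _ fx] : range f (f1 p) by rewrite rf -rf1; exists p.
  by exists x.
exists P, g, f1; split=> // [x|W /MB[B mB ->]].
  have [p _ fp] : range f1 (f x) by rewrite rf1 -rf; exists x.
  by exists p; apply: finj; rewrite gf.
have fg : f \o g = f1 by apply: funext.
by exists B; [exact: mB|rewrite -comp_preimage fg].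
Qed.

End AnalyticSpaces.

Lemma countably_separatedP (T : Type) (S : set (set T)) : countably_separated S ->
  exists D, [/\ countable D, D `<=` S &
    forall z z', z <> z' -> exists2 W, D W & ~ (W z <-> W z')].
Proof.
move=> [D [cD DS sepD]]; exists D; split=> // z z' /sepD[W DW sepW].
exists W => // -[zz' z'z].
by case: sepW => -[Wz nW]; [apply: nW (zz' Wz)|apply: nW (z'z Wz)].
Qed.

Theorem analytic_prod_separating_generates {R : realType} {X U : Type}
    (M : set (set X)) (UU : set (set U)) (D : set (set (X * U))) (x0 : X) (u0 : U) :
  analytic_space R M -> analytic_space R UU -> countable D -> D `<=` prod_sigma M UU ->
  (forall z z', z <> z' -> exists2 W, D W & ~ (W z <-> W z')) ->
  prod_sigma M UU `<=` <<s D >>.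
Proof.
move=> /analytic_space_param[P1 [g1 [f1 [pol1 sg1 cf1 Mf1]]]].
move=> /analytic_space_param[P2 [g2 [f2 [pol2 sg2 cf2 Mf2]]]] cD DMU sepD.
pose h (p : P1 * P2) := (g1 p.1, g2 p.2).
have [p1 _] := sg1 x0; have [p2 _] := sg2 u0.
pose b := bprod (@ball R P1) (@ball R P2).
have pb : bpolish b := bprod_polish (ball_bpolish p1 pol1) (ball_bpolish p2 pol2).
have hb : bhausdorff b := bprod_hausdorff (ball_bhausdorff pol1.1) (ball_bhausdorff pol2.1).
have cl W : prod_sigma M UU W -> clopenable b (h @^-1` W).
  apply: (prod_sigma_preimage (clopenable_sigma pb hb)) => m u /Mf1[B1 mB1 e1] /Mf2[B2 mB2 e2].
  have c1 : bcontinuous b (f1 \o fst) by apply/bcontinuous_fst/continuous_bcontinuous.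
  have c2 : bcontinuous b (f2 \o snd) by apply/bcontinuous_snd/continuous_bcontinuous.
  have -> : h @^-1` (m `*` u) = (f1 \o fst) @^-1` B1 `&` (f2 \o snd) @^-1` B2.
    have E1 q : m (g1 q) = B1 (f1 q) by rewrite -[LHS]/((g1 @^-1` m) q) e1.
    have E2 q : u (g2 q) = B2 (f2 q) by rewrite -[LHS]/((g2 @^-1` u) q) e2.
    by apply/seteqP; split=> -[q1 q2] /=; rewrite E1 E2.
  by apply: (sigmaI (clopenable_sigma pb hb)); apply: (clopenable_preimage pb hb).
move=> W /cl cW; apply: (blackwell pb hb _ cD sepD _ cW).
  by move=> [x u]; have [q1 <-] := sg1 x; have [q2 <-] := sg2 u; exists (q1, q2).
by move=> V /DMU /cl.
Qed.

Theorem theorem3p6 (R : realType) (X U : Type)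
  (M : set (set X)) (UU : set (set U))
  (A : set (set X)) (F G : set (set U))
  (hM : analytic_space R M) (hU : analytic_space R UU)
  (hA : is_sigma_algebra A) (hAM : A `<=` M)
  (hF : is_sigma_algebra F) (hFU : F `<=` UU)
  (hG : is_sigma_algebra G) (hGU : G `<=` UU)
  (hAcg : countably_generated A) (hFGcg : countably_generated (F `&` G))
  (hPcg : countably_generated (prod_sigma A F `&` prod_sigma A G))
  (hPcs : countably_separated (prod_sigma A F `&` prod_sigma A G)) :
  prod_sigma A F `&` prod_sigma A G = prod_sigma A (F `&` G).
Proof.
set H := prod_sigma A F `&` prod_sigma A G.
have HMU : H `<=` prod_sigma M UU by move=> E [/(prod_sigmaS hAM hFU)].
have AFG F' : F `&` G `<=` F' -> prod_sigma A (F `&` G) `<=` prod_sigma A F'.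
  exact: prod_sigmaS.
apply/seteqP; split; last by move=> E hE; split; apply: (AFG _ _ E hE) => W [].
have [[[x0 u0] _]|XU0] := pselect (exists z : X * U, True); last first.
  move=> E _; rewrite (_ : E = set0); first exact: sigma_algebra0.
  by apply/seteqP; split=> z // _; apply: XU0; exists z.
have [D [cD DH sepD]] := countably_separatedP hPcs.
have MUU_H : prod_sigma M UU `<=` H.
  move=> W /(analytic_prod_separating_generates x0 u0 hM hU cD (subset_trans DH HMU) sepD) WD.
  by split; apply: (smallest_sub (smallest_sigma_algebra _ _) _ WD) => V /DH[].
have rectH m u : M m -> UU u -> H (m `*` u).
  by move=> Mm Uu; apply: MUU_H; apply: sub_sigma_algebra; exists m => //; exists u.
have M_A : M `<=` A.
  move=> m Mm; have [AFm _] := rectH m setT Mm (analytic_spaceT hU).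
  exact: (prod_sigma_rect_fst hA (ex_intro _ u0 I) AFm).
have UU_FG : UU `<=` F `&` G.
  move=> u Uu; have [AFu AGu] := rectH setT u (analytic_spaceT hM) Uu.
  split; [exact: (prod_sigma_rect_snd hF (ex_intro _ x0 I) AFu)|].
  exact: (prod_sigma_rect_snd hG (ex_intro _ x0 I) AGu).
by move=> E /HMU; apply: prod_sigmaS.
Qed.
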